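(* Let $\mathfrak F$ be a semiclosed generalized flag in $V$. Then every nonzero proper closed subspace of $V$ which is stable under $\mathrm{St}_{\mathfrak F}$ is both a union of members of $\mathfrak F$ and an intersection of members of $\mathfrak F$.
   Context: $V,V_*$ are countable-dimensional complex vector spaces with a nondegenerate pairing $\langle\cdot,\cdot\rangle$; $\mathfrak{gl}(V,V_* )=V\otimes V_*$ acts on $V$ by $(v\otimes w)u=\langle u,w\rangle v$. For a subspace $F$ of $V$ (resp. $V_*$), $F^\perp$ is its orthogonal in $V_*$ (resp. $V$); $F$ is closed if $F=F^{\perp\perp}$, and $\overline F:=F^{\perp\perp}$. A chain is a totally ordered (by inclusion) set of subspaces. In a chain, $C'\subsetneq C''$ form an immediate predecessor–successor pair (''pair'') if no member lies strictly between them. A generalized flag is a chain $\mathfrak F$ such that (i) every member belongs to some pair of $\mathfrak F$, and (ii) for each nonzero $v\in V$ there is a pair $F'\subset F''$ in $\mathfrak F$ with $v\in F''\setminus F'$. Pairs are indexed by a set $A$: $F'_\alpha\subset F''_\alpha$. $\mathfrak F$ is semiclosed if $\overline{F'_\alpha}\in\{F'_\alpha,F''_\alpha\}$ for all $\alpha\in A$. $\mathrm{St}_{\mathfrak F}$ denotes the stabilizer of $\mathfrak F$ in $\mathfrak{gl}(V,V_* )$ (elements mapping each member into itself). *)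

From HB Require Import structures.
From mathcomp Require Import all_boot all_order all_algebra.
Set Implicit Arguments. Unset Strict Implicit. Unset Printing Implicit Defensive.
Import GRing.Theory Num.Theory.
Local Open Scope ring_scope.

Section Defs.
Variable K : numClosedFieldType.   (* stands for the complex field C *)

Definition countable_dim (V : lmodType K) : Prop :=
  exists e : nat -> V, forall v : V,
    exists (n : nat) (c : nat -> K), v = \sum_(i < n) c i *: e i.

Variables (V Vs : lmodType K) (pair : V -> Vs -> K).

Definition bilinear_pairing : Prop :=
  (forall (a : K) (u v : V) (w : Vs), pair (a *: u + v) w = a * pair u w + pair v w) /\
  (forall (a : K) (v : V) (w w' : Vs), pair v (a *: w + w') = a * pair v w + pair v w').

Definition pairing_nondeg : Prop :=
  (forall v : V, (forall w : Vs, pair v w = 0) -> v = 0) /\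
  (forall w : Vs, (forall v : V, pair v w = 0) -> w = 0).

Definition subspace (T : lmodType K) (F : T -> Prop) : Prop :=
  F 0 /\ (forall (a : K) (u v : T), F u -> F v -> F (a *: u + v)).

Definition sub_set (A B : V -> Prop) : Prop := forall v, A v -> B v.
Definition same_set (A B : V -> Prop) : Prop := forall v, A v <-> B v.
Definition strict_sub (A B : V -> Prop) : Prop := sub_set A B /\ ~ sub_set B A.

Definition perpV (F : V -> Prop) : Vs -> Prop := fun w => forall v, F v -> pair v w = 0.
Definition perpVs (G : Vs -> Prop) : V -> Prop := fun v => forall w, G w -> pair v w = 0.
Definition pclosure (F : V -> Prop) : V -> Prop := perpVs (perpV F).
Definition pclosed (F : V -> Prop) : Prop := same_set F (pclosure F).

(* gl(V,V_* ) = V (x) V_* : an element is a finite sum of tensors v (x) w,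
   acting by (v (x) w) u = <u,w> v. *)
Definition gl_act (x : seq (V * Vs)) (u : V) : V :=
  \sum_(p <- x) pair u p.2 *: p.1.

Definition subsp_chain (Fl : (V -> Prop) -> Prop) : Prop :=
  (forall C, Fl C -> subspace C) /\
  (forall A B, Fl A -> Fl B -> sub_set A B \/ sub_set B A).

Definition is_pair (Fl : (V -> Prop) -> Prop) (A B : V -> Prop) : Prop :=
  Fl A /\ Fl B /\ strict_sub A B /\
  ~ (exists C, Fl C /\ strict_sub A C /\ strict_sub C B).

Definition generalized_flag (Fl : (V -> Prop) -> Prop) : Prop :=
  subsp_chain Fl /\
  (forall C, Fl C -> exists D, is_pair Fl C D \/ is_pair Fl D C) /\
  (forall v : V, v <> 0 -> exists A B, is_pair Fl A B /\ B v /\ ~ A v).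

Definition semiclosed (Fl : (V -> Prop) -> Prop) : Prop :=
  forall A B, is_pair Fl A B -> same_set (pclosure A) A \/ same_set (pclosure A) B.

Definition in_St (Fl : (V -> Prop) -> Prop) (x : seq (V * Vs)) : Prop :=
  forall C, Fl C -> forall u, C u -> C (gl_act x u).

Definition St_stable (Fl : (V -> Prop) -> Prop) (W : V -> Prop) : Prop :=
  forall x, in_St Fl x -> forall u, W u -> W (gl_act x u).

End Defs.

(* Since F is a chain, every member C sits on one side of every
   pair A ⊊ B of F: either C ⊆ A or B ⊆ C.  Hence, for w ∈ A^⊥ and u ∈ B, the
   rank-one operator u ⊗ w stabilizes F; applying it to a vector v ∈ W with
   <v,w> ≠ 0 puts u in W.  So W ⊇ B as soon as W contains a vector outside the
   closure of A.  Semiclosedness (closure of A is A or B) and the closedness of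
   W upgrade this to: if W meets B \ A then B ⊆ W.  The theorem follows:
   W is the union of the members it contains, and, by a comparison of pairs,
   the intersection of the members containing it. *)
From HB Require Import structures.
From mathcomp Require Import all_boot all_order all_algebra.
From Stdlib Require Import Classical.
Import GRing.Theory Num.Theory.
Local Open Scope ring_scope.

Section Flag.
Set Implicit Arguments. Unset Strict Implicit.
Variable K : numClosedFieldType.
Variables (V Vs : lmodType K) (pair : V -> Vs -> K).

Lemma subspace_scale (C : V -> Prop) (a : K) (u : V) :
  subspace C -> C u -> C (a *: u).
Proof. by move=> [C0 CS] Cu; rewrite -[a *: u]addr0; apply: CS. Qed.

Lemma pclosure_mono (A B : V -> Prop) :
  sub_set A B -> sub_set (pclosure pair A) (pclosure pair B).
Proof. by move=> sAB v hv w hw; apply: hv => x Ax; apply: hw; apply: sAB. Qed.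

Lemma not_in_pclosure (A : V -> Prop) (v : V) :
  ~ pclosure pair A v -> exists w, perpV pair A w /\ pair v w <> 0.
Proof.
move=> ncl; apply: NNPP => hn; apply: ncl => w hw.
by apply: NNPP => hne; apply: hn; exists w.
Qed.

Lemma gl_act_rank_one (u : V) (w : Vs) (c : V) :
  gl_act pair [:: (u, w)] c = pair c w *: u.
Proof. by rewrite /gl_act big_cons big_nil addr0. Qed.

Variable Fl : (V -> Prop) -> Prop.
Variable W : V -> Prop.
Hypothesis hW : subspace W.
Hypothesis hst : St_stable pair Fl W.

Section Chain.
Hypothesis hchain : subsp_chain Fl.

Lemma pair_split (A B C : V -> Prop) :
  is_pair Fl A B -> Fl C -> sub_set C A \/ sub_set B C.
Proof.
move=> [FA [FB [sAB nC]]] FC; have [_ hcmp] := hchain.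
case: (classic (sub_set C A)) => [|nCA]; first by left.
case: (classic (sub_set B C)) => [|nBC]; first by right.
exfalso; apply: nC; exists C; split=> //; split; split=> //.
- by case: (hcmp C A FC FA).
- by case: (hcmp C B FC FB).
Qed.

Lemma pair_sub_member (A B C : V -> Prop) (u : V) :
  is_pair Fl A B -> Fl C -> C u -> ~ A u -> sub_set B C.
Proof. by move=> pAB FC Cu nAu; case: (pair_split pAB FC) => // sCA; case: nAu; apply: sCA. Qed.

Lemma rank_one_in_St (A B : V -> Prop) (u : V) (w : Vs) :
  is_pair Fl A B -> perpV pair A w -> B u -> in_St pair Fl [:: (u, w)].
Proof.
move=> pAB hw Bu C FC c Cc; rewrite gl_act_rank_one.
have sC : subspace C by case: hchain => hs _; apply: hs.
case: (pair_split pAB FC) => [sCA|sBC]; last by apply: subspace_scale => //; apply: sBC.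
by rewrite (hw c (sCA _ Cc)) scale0r; case: sC.
Qed.

Lemma stable_sub_successor (A B : V -> Prop) (v : V) :
  W v -> is_pair Fl A B -> ~ pclosure pair A v -> sub_set B W.
Proof.
move=> Wv pAB /not_in_pclosure [w [hw hvw]] u Bu.
have := hst (rank_one_in_St pAB hw Bu) Wv; rewrite gl_act_rank_one => Wvu.
have -> : u = (pair v w)^-1 *: (pair v w *: u) by rewrite scalerA mulVf ?scale1r //; apply/eqP.
exact: subspace_scale.
Qed.

End Chain.

Hypothesis hflag : generalized_flag Fl.
Hypothesis hsc : semiclosed pair Fl.
Hypothesis hcl : pclosed pair W.

Let hchain : subsp_chain Fl := proj1 hflag.
Let hpoint : forall v : V, v <> 0 -> exists A B, is_pair Fl A B /\ B v /\ ~ A v :=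
  proj2 (proj2 hflag).

Lemma stable_sub_pair (A B : V -> Prop) (v : V) :
  W v -> is_pair Fl A B -> ~ A v -> sub_set B W.
Proof.
move=> Wv pAB nAv.
case: (hsc pAB) => hclA; first by apply: (stable_sub_successor hchain Wv pAB) => /hclA /nAv.
have sAW : sub_set A W.
  move=> u Au; case: (classic (u = 0)) => [->|nz]; first by case: hW.
  have [A' [B' [pAB' [B'u nA'u]]]] := hpoint nz.
  have sB'A : sub_set B' A := pair_sub_member hchain pAB' pAB.1 Au nA'u.
  apply: (stable_sub_successor hchain Wv pAB' _ B'u) => hv; apply/nAv/sB'A.
  case: (hsc pAB') => /(_ v) h; last exact/h.
  by have [_ [_ [[sA'B' _] _]]] := pAB'; apply/sA'B'/h.
by move=> u Bu; apply/hcl; apply: (pclosure_mono sAW); apply/hclA.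
Qed.

Lemma stable_point_member (v : V) :
  W v -> v <> 0 -> exists C, (Fl C /\ sub_set C W) /\ C v.
Proof.
move=> Wv nz; have [A [B [pAB [Bv nAv]]]] := hpoint nz.
by exists B; split=> //; split; [exact: pAB.2.1 | exact: stable_sub_pair Wv pAB nAv].
Qed.

Lemma stable_meet_members (v : V) :
  (forall C, Fl C /\ sub_set W C -> C v) -> W v.
Proof.
move=> hall; apply: NNPP => nWv.
have nz : v <> 0 by move=> e; apply: nWv; rewrite e; case: hW.
have [A [B [pAB [Bv nAv]]]] := hpoint nz.
apply: nAv; apply: hall; split; first exact: pAB.1.
move=> z Wz; apply: NNPP => nAz.
have nzz : z <> 0 by move=> e; apply: nAz; rewrite e; case: (proj1 hchain A pAB.1).
have [A' [B' [pAB' [B'z nA'z]]]] := hpoint nzz.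
have sBB' : sub_set B B' := pair_sub_member hchain pAB pAB'.2.1 B'z nAz.
by apply: nWv; apply: (stable_sub_pair Wz pAB' nA'z); apply: sBB'.
Qed.

End Flag.

Theorem lemma3p1 (K : numClosedFieldType) (V Vs : lmodType K)
  (pair : V -> Vs -> K)
  (hV : countable_dim V) (hVs : countable_dim Vs)
  (hbil : bilinear_pairing pair) (hnd : pairing_nondeg pair)
  (Fl : (V -> Prop) -> Prop)
  (hflag : generalized_flag Fl) (hsc : semiclosed pair Fl)
  (W : V -> Prop) (hW : subspace W)
  (hnz : exists v, W v /\ v <> 0) (hprop : exists v, ~ W v)
  (hcl : pclosed pair W) (hst : St_stable pair Fl W) :
  (exists S : (V -> Prop) -> Prop, (forall C, S C -> Fl C) /\
     forall v, W v <-> exists C, S C /\ C v) /\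
  (exists S : (V -> Prop) -> Prop, (forall C, S C -> Fl C) /\
     forall v, W v <-> forall C, S C -> C v).
Proof.
have member := stable_point_member hW hst hflag hsc hcl.
split.
- exists (fun C => Fl C /\ sub_set C W); split=> [C []//|v].
  split=> [Wv|[C [[_ sCW] Cv]]]; last exact: sCW.
  case: (classic (v = 0)) => [->|]; last exact: member.
  have [v0 [Wv0 nz0]] := hnz; have [C [[FC sCW] _]] := member v0 Wv0 nz0.
  by exists C; split=> //; case: (proj1 (proj1 hflag) C FC).
- exists (fun C => Fl C /\ sub_set W C); split=> [C []//|v].
  split=> [Wv C [_ sWC]|]; first exact: sWC.
  exact: stable_meet_members hW hst hflag hsc hcl v.
Qed.
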